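(* Let $\mathbb{K}$ be an algebraically closed field of characteristic $p$, with $p=0$ or $p>n$. If $(\Gamma_1,\Gamma_2,\Gamma_3)$ and $(\Sigma_1,\Sigma_2,\Sigma_3)$ are triangular dual $3$-nets of order $n$ in $PG(2,\mathbb{K})$ with $\Gamma_1=\Sigma_1$, then their associated triangles share the two vertices lying on their common side (the line containing $\Gamma_1=\Sigma_1$).
   Context: A dual $3$-net of order $n$ in $PG(2,\mathbb{K})$ is a triple of pairwise disjoint point sets, each of size $n$, such that every line meeting two distinct components meets each component in exactly one point. A dual $3$-net of order $n\ge4$ is triangular if its three components lie respectively on the three sides of a triangle; this (uniquely determined) triangle is called its associated triangle. *)

From HB Require Import structures.
From mathcomp Require Import all_boot all_order all_algebra.
Set Implicit Arguments. Unset Strict Implicit. Unset Printing Implicit Defensive.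
Import Order.TTheory GRing.Theory Num.Theory.
Local Open Scope ring_scope.

(* Model of PG(2,K): points and lines are nonzero row vectors of K^3,
   taken up to nonzero scalars; incidence is vanishing of the dot product. *)

Definition i0 : 'I_3 := @Ordinal 3 0 isT.
Definition i1 : 'I_3 := @Ordinal 3 1 isT.
Definition i2 : 'I_3 := @Ordinal 3 2 isT.

Section PG2.
Variable K : fieldType.
Implicit Types (u v x l : 'rV[K]_3) (s : seq 'rV[K]_3).

Definition incid l x : bool := \sum_(i < 3) l 0 i * x 0 i == 0.

Definition proj_eq u v : Prop := exists2 c : K, c != 0 & v = c *: u.

Definition proj_pointset s : Prop :=
  (forall x : 'rV[K]_3, x \in s -> x != 0) /\
  (forall i j, (i < size s)%N -> (j < size s)%N -> proj_eq s`_i s`_j -> i = j).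

Definition same_pointset (s t : seq 'rV[K]_3) : Prop :=
  (forall x : 'rV[K]_3, x \in s -> exists2 y : 'rV[K]_3, y \in t & proj_eq x y) /\
  (forall y : 'rV[K]_3, y \in t -> exists2 x : 'rV[K]_3, x \in s & proj_eq x y).

Definition dual_3net (n : nat) (G : 'I_3 -> seq 'rV[K]_3) : Prop :=
  [/\ forall k, size (G k) = n,
      forall k, proj_pointset (G k),
      forall i j, i != j -> forall x y : 'rV[K]_3, x \in G i -> y \in G j -> ~ proj_eq x y &
      forall l, l != 0 -> forall i j, i != j ->
        has (incid l) (G i) -> has (incid l) (G j) ->
        forall k, count (incid l) (G k) = 1%N].

(* L i is the side of a triangle containing G i: three nonzero, non-concurrent
   lines (det <> 0), the k-th containing the k-th component *)
Definition triangle_for (G : 'I_3 -> seq 'rV[K]_3) (L : 'I_3 -> 'rV[K]_3) : Prop :=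
  [/\ forall k, L k != 0,
      \det (\matrix_(i < 3, j < 3) L i 0 j) != 0 &
      forall k, all (incid (L k)) (G k)].

Definition triangular_dual_3net (n : nat) (G : 'I_3 -> seq 'rV[K]_3) : Prop :=
  [/\ (4 <= n)%N, dual_3net n G & exists L, triangle_for G L].

Definition vertex_on_side0 (L : 'I_3 -> 'rV[K]_3) v : bool :=
  incid (L i0) v && (incid (L i1) v || incid (L i2) v).

End PG2.

(* Coordinatise the common side by the triangle of each net: the point [y] has
   coordinate [(L i2 . y) / (L i1 . y)], which is [0] and [oo] exactly at the two
   vertices on that side.  By Menelaus, a line through points of the three
   components is recorded by the product of their coordinates being [-1];
   chaining four such lines shows that the coordinates of the points of the
   first component are closed under [(a, b, c) |-> a c / b], i.e. form a coset
   [A] of the group of n-th roots of unity.  The coordinate of the second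
   triangle on the same side is a Moebius transform [(r + s a) / (p + q a)] of
   the first one, and it maps [A] onto another such coset.  Hence
   [(r + s X)^n - be (p + q X)^n] vanishes on [A], and since [A] is the set of
   roots of [X^n - al], its coefficients of [X] and [X^2] vanish; when [n] and
   [C(n, 2)] are invertible this forces [p = s = 0] or [q = r = 0], so the
   transform fixes or swaps [0] and [oo]. *)

From HB Require Import structures.
From mathcomp Require Import all_boot all_order all_algebra.
From mathcomp Require Import ring zify.
Import GRing.Theory.
Set Implicit Arguments. Unset Strict Implicit. Unset Printing Implicit Defensive.
Local Open Scope ring_scope.

Section Frame.
Variable K : fieldType.
Implicit Types (l x y : 'rV[K]_3) (L : 'I_3 -> 'rV[K]_3).

Definition dot l x : K := \sum_(i < 3) l 0 i * x 0 i.

Lemma incidE l x : incid l x = (dot l x == 0).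
Proof. by []. Qed.

Lemma dotDr l x y : dot l (x + y) = dot l x + dot l y.
Proof. by rewrite /dot -big_split; apply: eq_bigr => i _; rewrite mxE mulrDr. Qed.

Lemma dotZr l x c : dot l (c *: x) = c * dot l x.
Proof. by rewrite /dot mulr_sumr; apply: eq_bigr => i _; rewrite mxE; ring. Qed.

Lemma dotBr l x y : dot l (x - y) = dot l x - dot l y.
Proof. by rewrite dotDr -scaleN1r dotZr; ring. Qed.

Lemma dotDl l l' x : dot (l + l') x = dot l x + dot l' x.
Proof. by rewrite /dot -big_split; apply: eq_bigr => i _; rewrite mxE mulrDl. Qed.

Lemma dotZl l x c : dot (c *: l) x = c * dot l x.
Proof. by rewrite /dot mulr_sumr; apply: eq_bigr => i _; rewrite mxE; ring. Qed.

Lemma dot0l x : dot 0 x = 0.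
Proof. by rewrite /dot big1 // => i _; rewrite mxE mul0r. Qed.

Lemma dot0r l : dot l 0 = 0.
Proof. by rewrite /dot big1 // => i _; rewrite mxE mulr0. Qed.

Definition lines_mx L : 'M[K]_3 := \matrix_(i < 3, j < 3) L i 0 j.

Lemma frame_eq0 L x :
  \det (lines_mx L) != 0 -> (forall i, dot (L i) x = 0) -> x = 0.
Proof.
move=> hd hx.
have u : lines_mx L \in unitmx by rewrite unitmxE unitfE.
have hLx : lines_mx L *m x^T = 0.
  apply/matrixP => i j; rewrite !mxE (ord1 j) -[RHS](hx i) /dot.
  by apply: eq_bigr => k _; rewrite !mxE.
have : x^T = 0 by rewrite -(mulKmx u x^T) hLx mulmx0.
by move=> /(congr1 trmx); rewrite trmxK trmx0.
Qed.

Lemma dual_frame L : \det (lines_mx L) != 0 ->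
  exists N, forall i j, dot (L i) (N j) = (i == j)%:R.
Proof.
move=> hd.
have u : lines_mx L \in unitmx by rewrite unitmxE unitfE.
exists (fun j => \row_k (invmx (lines_mx L)) k j) => i j.
have := mulmxV u; move=> /matrixP /(_ i j); rewrite !mxE => <-.
by apply: eq_bigr => k _; rewrite !mxE.
Qed.

Lemma ord3P (i : 'I_3) : [\/ i = i0, i = i1 | i = i2].
Proof.
case: i => [[|[|[|m]]] Hm] //.
- by constructor 1; apply: val_inj.
- by constructor 2; apply: val_inj.
- by constructor 3; apply: val_inj.
Qed.

Section DistinctSides.
Variables (L : 'I_3 -> 'rV[K]_3) (i j k : 'I_3).
Hypotheses (hd : \det (lines_mx L) != 0)
  (hij : i != j) (hik : i != k) (hjk : j != k).

Lemma ord3_distinctP (m : 'I_3) : [\/ m = i, m = j | m = k].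
Proof.
case: (ord3P i) hij hik => -> hij' hik'; case: (ord3P j) hij' hjk => -> hij'' hjk';
case: (ord3P k) hik' hjk' => -> hik'' hjk''; try by [];
case: (ord3P m) => ->; by [constructor 1|constructor 2|constructor 3].
Qed.

Lemma frame3_eq0 x :
  dot (L i) x = 0 -> dot (L j) x = 0 -> dot (L k) x = 0 -> x = 0.
Proof.
move=> hi hj hk; apply: (frame_eq0 hd) => m.
by case: (ord3_distinctP m) => ->.
Qed.

Lemma proj_eq_vertex x w : x != 0 -> w != 0 ->
  dot (L j) x = 0 -> dot (L k) x = 0 -> dot (L j) w = 0 -> dot (L k) w = 0 ->
  proj_eq x w.
Proof.
move=> x0 w0 xj xk wj wk.
have xi : dot (L i) x != 0 by apply: contra_neq x0 => xi; apply: frame3_eq0.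
have wi : dot (L i) w != 0 by apply: contra_neq w0 => wi; apply: frame3_eq0.
exists (dot (L i) w / dot (L i) x); first by rewrite mulf_neq0 ?invr_eq0.
apply/eqP; rewrite -subr_eq0; apply/eqP.
apply: frame3_eq0; rewrite dotBr dotZr.
- by rewrite divfK // subrr.
- by rewrite xj wj; ring.
- by rewrite xk wk; ring.
Qed.

Lemma frame_comb_neq0 a b c : c != 0 -> a *: L i + b *: L j + c *: L k != 0.
Proof.
move=> c0; apply/eqP => l0.
have [N hN] := dual_frame hd.
have := congr1 (fun l => dot l (N k)) l0; rewrite /= dot0l !dotDl !dotZl !hN.
rewrite eqxx (negbTE hik) (negbTE hjk) => /eqP; rewrite !mulr0 !add0r mulr1.
by rewrite (negbTE c0).
Qed.

End DistinctSides.

Lemma proj_eq_side0 L x x' : \det (lines_mx L) != 0 ->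
  dot (L i0) x = 0 -> dot (L i0) x' = 0 ->
  dot (L i1) x != 0 -> dot (L i1) x' != 0 ->
  dot (L i1) x * dot (L i2) x' = dot (L i2) x * dot (L i1) x' ->
  proj_eq x x'.
Proof.
move=> hd x0 x'0 x1 x'1 e.
exists (dot (L i1) x' / dot (L i1) x); first by rewrite mulf_neq0 ?invr_eq0.
apply/eqP; rewrite -subr_eq0; apply/eqP.
apply: (@frame3_eq0 L i0 i1 i2) => //; rewrite dotBr dotZr.
- by rewrite x0 x'0; ring.
- by rewrite divfK // subrr.
- have -> : dot (L i2) x' = dot (L i2) x * dot (L i1) x' / dot (L i1) x.
    by rewrite -e; field.
  by field.
Qed.

End Frame.

Section PointSets.
Variable K : fieldType.
Implicit Types (x y : 'rV[K]_3) (s t : seq 'rV[K]_3).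

Lemma proj_eq_sym x y : proj_eq x y -> proj_eq y x.
Proof.
case=> c c0 ->; exists c^-1; first by rewrite invr_eq0.
by rewrite scalerA mulVf // scale1r.
Qed.

Lemma same_pointset_sym s t : same_pointset s t -> same_pointset t s.
Proof.
case=> st ts; split.
- by move=> y /ts [x xs e]; exists x => //; apply: proj_eq_sym.
- by move=> x /st [y yt e]; exists y => //; apply: proj_eq_sym.
Qed.

Lemma proj_pointset_uniq s : proj_pointset s -> uniq s.
Proof.
case=> _ h; apply/(uniqP 0) => i j hi hj e; apply: h => //.
by exists 1; rewrite ?oner_eq0 // scale1r e.
Qed.

Lemma proj_pointset_eq s x y :
  proj_pointset s -> x \in s -> y \in s -> proj_eq x y -> x = y.
Proof.
case=> _ h xs ys pxy.
rewrite -(nth_index 0 xs) -(nth_index 0 ys); congr nth.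
by apply: h; rewrite ?index_mem ?nth_index.
Qed.

Lemma same_pointset_dot_eq0 s t (l : 'rV[K]_3) :
  same_pointset s t -> (forall y, y \in t -> dot l y = 0) ->
  forall x, x \in s -> dot l x = 0.
Proof.
case=> st _ ht x /st [y /ht ly [c c0 yE]].
by move: ly; rewrite yE dotZr => /eqP; rewrite mulf_eq0 (negbTE c0) => /eqP.
Qed.

End PointSets.

Definition coord_ratio (K : fieldType) (L : 'I_3 -> 'rV[K]_3) (i j : 'I_3) y : K :=
  dot (L j) y / dot (L i) y.

Lemma coord_ratioZ (K : fieldType) (L : 'I_3 -> 'rV[K]_3) i j (c : K) y :
  c != 0 -> coord_ratio L i j (c *: y) = coord_ratio L i j y.
Proof.
move=> c0; rewrite /coord_ratio !dotZr.
have [->|yi] := eqVneq (dot (L i) y) 0; first by rewrite mulr0 !invr0 !mulr0.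
by field; rewrite c0 yi.
Qed.

Section Cosets.
Variable K : fieldType.

Lemma prodr_mull (r : K) (A : seq K) :
  \prod_(x <- A) (r * x) = r ^+ size A * \prod_(x <- A) x.
Proof.
elim: A => [|a A IH]; first by rewrite !big_nil expr0 mulr1.
by rewrite !big_cons IH /= exprS; ring.
Qed.

(* [x |-> (a / a0) * x] permutes [A], so [(a / a0) ^+ size A = 1]. *)
Lemma coset_exp_size (A : seq K) a0 :
  uniq A -> a0 \in A -> (forall x, x \in A -> x != 0) ->
  (forall a x, a \in A -> x \in A -> a * x / a0 \in A) ->
  forall a, a \in A -> a ^+ size A = a0 ^+ size A.
Proof.
move=> uA a0A nz cl a aA.
set r := a / a0.
have sub : {subset map (fun x => r * x) A <= A}.
  by move=> y /mapP [x xA ->]; rewrite /r mulrAC; apply: cl.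
have um : uniq (map (fun x => r * x) A).
  rewrite map_inj_in_uniq // => x y _ _; apply: mulfI.
  by rewrite mulf_neq0 ?invr_eq0 ?nz.
have [_ eqm] := uniq_min_size um sub (eq_leq (esym (size_map _ A))).
have e : \prod_(x <- A) (r * x) = \prod_(x <- A) x.
  rewrite -(big_map (fun x => r * x) xpredT id).
  exact/perm_big/uniq_perm.
have p0 : \prod_(x <- A) x != 0.
  by rewrite prodf_seq_neq0; apply/allP => x xA; apply: nz.
have /(mulIf p0) : r ^+ size A * \prod_(x <- A) x = 1 * \prod_(x <- A) x.
  by rewrite -prodr_mull e mul1r.
rewrite /r expr_div_n => h.
have e0 : a0 ^+ size A != 0 by rewrite expf_neq0 ?nz.
by rewrite -(divfK e0 (a ^+ size A)) h mul1r.
Qed.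

Lemma menelaus_ratio (x1 x2 w0 w2 z0 z1 : K) :
  x1 != 0 -> w2 != 0 -> z0 != 0 -> x1 * w2 * z0 + x2 * w0 * z1 = 0 ->
  (x2 / x1) * (w0 / w2) * (z1 / z0) = -1.
Proof.
move=> h1 h2 h3 e.
have e' : x2 * w0 * z1 = - (x1 * w2 * z0) by rewrite -[RHS]add0r -e; ring.
transitivity ((x2 * w0 * z1) / (x1 * w2 * z0)); first by field; rewrite h1 h2 h3.
by rewrite e' mulNr divff // !mulf_neq0.
Qed.

Lemma menelaus_chain (a a' a'' a3 b b' c c' : K) :
  b != 0 -> b' != 0 -> c != 0 -> c' != 0 ->
  a'' * b * c = -1 -> a' * b' * c = -1 -> a * b' * c' = -1 -> a3 * b * c' = -1 ->
  a3 = a * a'' / a'.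
Proof.
move=> b0 b'0 c0 c'0.
have sol (t u v : K) : u != 0 -> v != 0 -> t * u * v = -1 -> t = - (u * v)^-1.
  by move=> u0 v0 e; rewrite -[t](mulfK (mulf_neq0 u0 v0)) mulrA e mulN1r.
move=> /(sol _ _ _ b0 c0) -> /(sol _ _ _ b'0 c0) -> /(sol _ _ _ b'0 c'0) ->.
move=> /(sol _ _ _ b0 c'0) ->.
by field; rewrite c0 b'0 b0 c'0 oppr_eq0 oner_eq0.
Qed.

End Cosets.

Section TriangularNet.
Variables (K : fieldType) (n : nat) (G : 'I_3 -> seq 'rV[K]_3) (L : 'I_3 -> 'rV[K]_3).
Hypotheses (hnet : dual_3net n G) (htr : triangle_for G L) (n_gt1 : (1 < n)%N).

Let hd : \det (lines_mx L) != 0. Proof. by case: htr. Qed.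

Lemma net_size k : size (G k) = n.
Proof. by case: hnet. Qed.

Lemma net_neq0 k x : x \in G k -> x != 0.
Proof. by case: hnet => _ hps _ _; case: (hps k) => h _; apply: h. Qed.

Lemma net_side k x : x \in G k -> dot (L k) x = 0.
Proof. by case: htr => _ _ h xk; apply/eqP; apply: (allP (h k)). Qed.

Lemma net_two_points k :
  [/\ (G k)`_0 \in G k, (G k)`_1 \in G k & ~ proj_eq (G k)`_0 (G k)`_1].
Proof.
split; rewrite ?mem_nth ?net_size ?(ltnW n_gt1) //.
case: hnet => _ hps _ _; case: (hps k) => _ h /h.
by rewrite net_size => /(_ (ltnW n_gt1) n_gt1).
Qed.

Lemma net_exists_off_side (i j k : 'I_3) : i != j -> i != k -> j != k ->
  exists2 z, z \in G k & dot (L j) z != 0.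
Proof.
move=> hij hik hjk.
have [z0k z1k np] := net_two_points k.
case: (eqVneq (dot (L j) (G k)`_0) 0) => h0; last by exists (G k)`_0.
case: (eqVneq (dot (L j) (G k)`_1) 0) => h1; last by exists (G k)`_1.
by case: np; apply: (proj_eq_vertex hd hij hik hjk);
  rewrite ?(net_neq0 z0k) ?(net_neq0 z1k) ?(net_side z0k) ?(net_side z1k).
Qed.

(* The line through [x] and a point [z] of [G k] off [L j] meets [G j] in a
   point of [L i], which would then be the vertex [x] itself. *)
Lemma net_off_side (i j k : 'I_3) x : i != j -> i != k -> j != k ->
  x \in G i -> dot (L j) x != 0.
Proof.
move=> hij hik hjk xi; apply/eqP => xj.
have xi0 := net_side xi.
have [z zk zj] := net_exists_off_side hij hik hjk.
set l := 0 *: L k + (- dot (L i) z) *: L j + dot (L j) z *: L i.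
have hl y : dot l y = dot (L j) z * dot (L i) y - dot (L i) z * dot (L j) y.
  by rewrite !dotDl !dotZl; ring.
have l0 : l != 0 by apply: frame_comb_neq0; rewrite // eq_sym.
case: hnet => _ _ hdisj hline.
have hx : has (incid l) (G i).
  by apply/hasP; exists x => //; rewrite incidE hl xi0 xj; apply/eqP; ring.
have hz : has (incid l) (G k).
  by apply/hasP; exists z => //; rewrite incidE hl; apply/eqP; ring.
have /eqP := hline l l0 i k hik hx hz j.
rewrite eqn_leq => /andP [_]; rewrite -has_count => /hasP [w wj].
rewrite incidE hl (net_side wj) mulr0 subr0 mulf_eq0 (negbTE zj) /= => /eqP wi.
apply: (hdisj i j hij x w xi wj).
by apply: (@proj_eq_vertex K L k i j hd);
  rewrite ?(eq_sym k) ?(net_neq0 xi) ?(net_neq0 wj) ?(net_side wj).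
Qed.

(* The cubic relation is the incidence of [z] with the line through [x] and [w],
   written in the coordinates of the triangle. *)
Lemma net_collinear (i j k : 'I_3) x w : i != j -> i != k -> j != k ->
  x \in G i -> w \in G j ->
  exists2 z, z \in G k &
    dot (L j) x * dot (L k) w * dot (L i) z
    + dot (L k) x * dot (L i) w * dot (L j) z = 0.
Proof.
move=> hij hik hjk xi wj.
have xj := net_off_side hij hik hjk xi.
have wi : dot (L i) w != 0 by apply: (net_off_side _ hjk hik wj); rewrite eq_sym.
set l := (- (dot (L j) x * dot (L k) w)) *: L i
  + (- (dot (L k) x * dot (L i) w)) *: L j + (dot (L j) x * dot (L i) w) *: L k.
have hl y : dot l y = - (dot (L j) x * dot (L k) w) * dot (L i) y
  - (dot (L k) x * dot (L i) w) * dot (L j) y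
  + (dot (L j) x * dot (L i) w) * dot (L k) y.
  by rewrite !dotDl !dotZl; ring.
have l0 : l != 0 by apply: frame_comb_neq0; rewrite ?mulf_neq0.
case: hnet => _ _ _ hline.
have hx : has (incid l) (G i).
  by apply/hasP; exists x => //; rewrite incidE hl (net_side xi); apply/eqP; ring.
have hw : has (incid l) (G j).
  by apply/hasP; exists w => //; rewrite incidE hl (net_side wj); apply/eqP; ring.
have /eqP := hline l l0 i j hij hx hw k.
rewrite eqn_leq => /andP [_]; rewrite -has_count => /hasP [z zk].
rewrite incidE hl (net_side zk) => /eqP hz; exists z => //.
by rewrite -[LHS]opprK -[RHS]oppr0 -hz; ring.
Qed.

Lemma coord_ratio_neq0 (i j k : 'I_3) x : i != j -> i != k -> j != k ->
  x \in G i -> coord_ratio L j k x != 0.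
Proof.
move=> hij hik hjk xi; rewrite mulf_neq0 ?invr_eq0 //.
- by apply: (net_off_side hik hij _ xi); rewrite eq_sym.
- exact: (net_off_side hij hik hjk xi).
Qed.

Lemma net_menelaus x w z : x \in G i0 -> w \in G i1 -> z \in G i2 ->
  dot (L i1) x * dot (L i2) w * dot (L i0) z
  + dot (L i2) x * dot (L i0) w * dot (L i1) z = 0 ->
  coord_ratio L i1 i2 x * coord_ratio L i2 i0 w * coord_ratio L i0 i1 z = -1.
Proof.
move=> xG wG zG; apply: menelaus_ratio.
- exact: (@net_off_side i0 i1 i2).
- exact: (@net_off_side i1 i2 i0).
- exact: (@net_off_side i2 i0 i1).
Qed.

(* Joining [x''] to a fixed [w] of [G i1], then alternately projecting back
   through [x'] and [x], realises [x'' * x / x'] on the coordinate of [G i0]. *)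
Lemma coord_ratio_closed x x' x'' : x \in G i0 -> x' \in G i0 -> x'' \in G i0 ->
  exists2 x3, x3 \in G i0 &
    coord_ratio L i1 i2 x3 = coord_ratio L i1 i2 x * coord_ratio L i1 i2 x''
                             / coord_ratio L i1 i2 x'.
Proof.
move=> xG x'G x''G.
have [wG _ _] := net_two_points i1; set w := (G i1)`_0 in wG.
have [z zG e1] := @net_collinear i0 i1 i2 _ _ isT isT isT x''G wG.
have [w' w'G e2] := @net_collinear i0 i2 i1 _ _ isT isT isT x'G zG.
have [z' z'G e3] := @net_collinear i0 i1 i2 _ _ isT isT isT xG w'G.
have [x3 x3G e4] := @net_collinear i1 i2 i0 _ _ isT isT isT wG z'G.
exists x3 => //.
apply: (menelaus_chain (b := coord_ratio L i2 i0 w) (b' := coord_ratio L i2 i0 w')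
  (c := coord_ratio L i0 i1 z) (c' := coord_ratio L i0 i1 z'));
  rewrite ?(coord_ratio_neq0 _ _ _ wG) ?(coord_ratio_neq0 _ _ _ w'G)
    ?(coord_ratio_neq0 _ _ _ zG) ?(coord_ratio_neq0 _ _ _ z'G) //;
  apply: net_menelaus => //.
- by rewrite -[RHS]e2; ring.
- by rewrite -[RHS]e4; ring.
Qed.

Lemma coord_ratio_uniq : uniq (map (coord_ratio L i1 i2) (G i0)).
Proof.
rewrite map_inj_in_uniq.
  by case: hnet => _ hps _ _; apply: proj_pointset_uniq (hps i0).
move=> x x' xG x'G /= e.
case: hnet => _ hps _ _; apply: (proj_pointset_eq (hps i0) xG x'G).
have x1 := @net_off_side i0 i1 i2 x isT isT isT xG.
have x'1 := @net_off_side i0 i1 i2 x' isT isT isT x'G.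
apply: (proj_eq_side0 hd); rewrite ?(net_side xG) ?(net_side x'G) //.
by move/eqP: e; rewrite eqr_div // => /eqP ->; rewrite mulrC.
Qed.

Lemma coord_ratio_exp_eq x y : x \in G i0 -> y \in G i0 ->
  coord_ratio L i1 i2 x ^+ n = coord_ratio L i1 i2 y ^+ n.
Proof.
move=> xG yG; rewrite -(net_size i0) -(size_map (coord_ratio L i1 i2)).
apply: coset_exp_size; rewrite ?map_f ?coord_ratio_uniq //.
- by move=> a /mapP [x' x'G ->]; apply: (@coord_ratio_neq0 i0).
- move=> a b /mapP [x1 x1G ->] /mapP [x2 x2G ->].
  have [x3 x3G <-] := coord_ratio_closed x1G yG x2G.
  exact: map_f.
Qed.

End TriangularNet.

Section BinomialCoset.
Variable K : fieldType.

Lemma natf_neq0_le (n m : nat) : (forall p, p \in [pchar K] -> (n < p)%N) ->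
  (0 < m <= n)%N -> m%:R != 0 :> K.
Proof.
move=> hc /andP [m0 mn]; apply/eqP => hm.
have [p pc] := natf0_pchar m0 (introT eqP hm).
have : (p <= m)%N by rewrite dvdn_leq // (dvdn_pcharf pc) hm.
by rewrite leqNgt (leq_ltn_trans mn (hc p pc)).
Qed.

Lemma natf_bin2_neq0 (n : nat) : (forall p, p \in [pchar K] -> (n < p)%N) ->
  (1 < n)%N -> 'C(n, 2)%:R != 0 :> K.
Proof.
move=> hc hn; apply: contraTneq isT => h.
have := mul_bin_diag n 1; rewrite bin1 => /(congr1 (GRing.natmul (1 : K))).
rewrite !natrM h mulr0 => /eqP; rewrite mulf_eq0 !(negbTE (natf_neq0_le hc _)) //.
all: lia.
Qed.

(* Reducing [(r + s X)^n - be (p + q X)^n] modulo [X^n - al] leaves a polynomial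
   of size at most [n] vanishing on the [n] points of [A]; its coefficients of
   degree [0 < k < n] are those of the unreduced polynomial. *)
Lemma exp_coset_bin_coef n (A : seq K) al be p q r s :
  uniq A -> size A = n ->
  (forall a, a \in A -> a ^+ n = al) ->
  (forall a, a \in A -> (r + s * a) ^+ n = be * (p + q * a) ^+ n) ->
  forall k, (0 < k < n)%N ->
    'C(n, k)%:R * (r ^+ (n - k) * s ^+ k - be * (p ^+ (n - k) * q ^+ k)) = 0.
Proof.
move=> uA sA hal hrs k /andP [k0 kn].
pose c j := 'C(n, j)%:R * (r ^+ (n - j) * s ^+ j - be * (p ^+ (n - j) * q ^+ j)).
pose H := \poly_(j < n) c j + (c n * al)%:P.
have expand a :
    \sum_(k < n.+1) c k * a ^+ k = (r + s * a) ^+ n - be * (p + q * a) ^+ n.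
  rewrite !exprDn mulr_sumr -sumrB; apply: eq_bigr => i _.
  rewrite /c mulr_natl !exprMn.
  move: (r ^+ (n - i)) (p ^+ (n - i)) (s ^+ i) (q ^+ i) (a ^+ i) ('C(n, i)).
  by move=> X1 X2 X3 X4 X5 C; ring.
have Hroot : all (root H) A.
  apply/allP => a aA; apply/rootP.
  rewrite hornerD horner_poly hornerC -(hal a aA).
  by have := expand a; rewrite hrs // subrr big_ord_recr.
have sizeH : (size H <= n)%N.
  apply: leq_trans (size_polyD _ _) _; rewrite geq_max size_poly size_polyC.
  by case: (_ != 0) => //=; lia.
have H0 : H = 0.
  apply/eqP/contraT => /max_poly_roots /(_ Hroot uA).
  by rewrite sA ltnNge sizeH.
have := congr1 (fun P : {poly K} => P`_k) H0.
by rewrite coefD coef_poly coefC coef0 kn (negbTE (lt0n_neq0 k0)) addr0.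
Qed.

Lemma bin_coef_diag n (be p q r s : K) :
  (2 < n)%N -> n%:R != 0 :> K -> 'C(n, 2)%:R != 0 :> K -> be != 0 ->
  p * s - q * r != 0 ->
  (forall k, (0 < k < n)%N ->
    'C(n, k)%:R * (r ^+ (n - k) * s ^+ k - be * (p ^+ (n - k) * q ^+ k)) = 0) ->
  (p = 0 \/ r = 0) /\ (q = 0 \/ s = 0).
Proof.
move=> hn hn0 hc2 be0 det hcoef.
have /eqP := hcoef 1%N (ltnW hn).
rewrite bin1 mulf_eq0 (negbTE hn0) /= subr_eq0 => /eqP E1.
have /eqP := hcoef 2%N hn.
rewrite mulf_eq0 (negbTE hc2) /= subr_eq0 => /eqP E2.
have [m hm] : exists m, n = m.+2 by exists (n - 2)%N; lia.
rewrite (_ : (n - 1 = m.+1)%N) in E1; last by lia.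
rewrite (_ : (n - 2 = m)%N) in E2; last by lia.
case: (eqVneq r 0) => r0.
  split; first by right.
  have p0 : p != 0 by apply: contraNneq det => ->; rewrite r0; apply/eqP; ring.
  left; move/esym/eqP: E1; rewrite r0 expr0n /= mul0r.
  by rewrite !mulf_eq0 (negbTE be0) expf_eq0 (negbTE p0) andbF => /eqP.
case: (eqVneq s 0) => s0.
  split; last by right.
  have q0 : q != 0 by apply: contraNneq det => ->; rewrite s0; apply/eqP; ring.
  left; move/esym/eqP: E1; rewrite s0 mulr0.
  by rewrite !mulf_eq0 (negbTE be0) expf_eq0 (negbTE q0) orbF => /eqP.
(* Eliminating [be] between [E1] and [E2] forces [r q = s p]. *)
have key : r ^+ m * s * (r * q - s * p) = 0.
  transitivity (q * (r ^+ m.+1 * s) - p * (r ^+ m * s ^+ 2)); first by rewrite exprS; ring.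
  by rewrite E1 E2 exprS; ring.
move/eqP: key; rewrite !mulf_eq0 expf_eq0 (negbTE r0) (negbTE s0) andbF /=.
by rewrite subr_eq0 (mulrC r q) (mulrC s p) eq_sym -subr_eq0 (negbTE det).
Qed.

End BinomialCoset.

Lemma det2_eq0_kernel (K : fieldType) (p q r s : K) : p * s - q * r = 0 ->
  exists m1 m2, [/\ (m1 != 0) || (m2 != 0), p * m1 + q * m2 = 0 & r * m1 + s * m2 = 0].
Proof.
move=> h.
have [pq0 | /norP [/negbNE/eqP p0 /negbNE/eqP q0]] := boolP ((p != 0) || (q != 0)).
  exists q, (- p); split; first by rewrite oppr_eq0 orbC.
  - by ring.
  - by rewrite -[RHS]oppr0 -h; ring.
have [rs0 | /norP [/negbNE/eqP r0 /negbNE/eqP s0]] := boolP ((r != 0) || (s != 0)).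
  exists s, (- r); split; first by rewrite oppr_eq0 orbC.
  - by rewrite p0 q0; ring.
  - by ring.
by exists 1, 0; split; rewrite ?oner_eq0 // ?p0 ?q0 ?r0 ?s0; ring.
Qed.

Section SharedSide.
Variables (K : fieldType) (LG LS N : 'I_3 -> 'rV[K]_3).
Hypotheses (hdG : \det (lines_mx LG) != 0)
  (hN : forall i j, dot (LG i) (N j) = (i == j)%:R).

Lemma side0_decomp x : dot (LG i0) x = 0 ->
  x = dot (LG i1) x *: N i1 + dot (LG i2) x *: N i2.
Proof.
move=> x0; apply/eqP; rewrite -subr_eq0; apply/eqP; apply: (frame_eq0 hdG) => m.
by rewrite dotBr dotDr !dotZr !hN; case: (ord3P m) => -> /=; rewrite ?x0; ring.
Qed.

Lemma dot_side0 l x : dot (LG i0) x = 0 ->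
  dot l x = dot (LG i1) x * dot l (N i1) + dot (LG i2) x * dot l (N i2).
Proof. by move=> x0; rewrite {1}(side0_decomp x0) dotDr !dotZr. Qed.

(* By Cramer's rule, [l] vanishes on [N i1] and [N i2]. *)
Lemma side0_line_eq0 l x x' :
  dot (LG i0) x = 0 -> dot (LG i0) x' = 0 ->
  dot (LG i1) x != 0 -> dot (LG i1) x' != 0 -> ~ proj_eq x x' ->
  dot l x = 0 -> dot l x' = 0 ->
  forall y, dot (LG i0) y = 0 -> dot l y = 0.
Proof.
move=> x0 x'0 x1 x'1 nxx' lx lx' y y0.
set D := dot (LG i1) x * dot (LG i2) x' - dot (LG i2) x * dot (LG i1) x'.
have D0 : D != 0.
  apply: contra_not_neq nxx' => /eqP; rewrite subr_eq0 => /eqP.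
  exact: proj_eq_side0.
rewrite (dot_side0 l y0) in lx lx' *; rewrite (dot_side0 l x0) in lx.
rewrite (dot_side0 l x'0) in lx'.
have -> : dot l (N i1) = 0.
  have : dot l (N i1) * D = dot (LG i2) x' * 0 - dot (LG i2) x * 0.
    by rewrite -{1}lx -lx' /D; ring.
  by rewrite !mulr0 subr0 => /eqP; rewrite mulf_eq0 (negbTE D0) orbF => /eqP.
have -> : dot l (N i2) = 0.
  have : dot l (N i2) * D = dot (LG i1) x * 0 - dot (LG i1) x' * 0.
    by rewrite -{1}lx' -lx /D; ring.
  by rewrite !mulr0 subr0 => /eqP; rewrite mulf_eq0 (negbTE D0) orbF => /eqP.
by rewrite !mulr0 addr0.
Qed.

Hypotheses (hdS : \det (lines_mx LS) != 0)
  (hside : forall y, dot (LG i0) y = 0 -> dot (LS i0) y = 0).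

Local Notation p := (dot (LS i1) (N i1)).
Local Notation q := (dot (LS i1) (N i2)).
Local Notation r := (dot (LS i2) (N i1)).
Local Notation s := (dot (LS i2) (N i2)).

Lemma side0_change_det : p * s - q * r != 0.
Proof.
apply/eqP => /det2_eq0_kernel [m1 [m2 [hm e1 e2]]].
set z := m1 *: N i1 + m2 *: N i2.
have fz i : dot (LG i) z = m1 * (i == i1)%:R + m2 * (i == i2)%:R.
  by rewrite dotDr !dotZr !hN.
have z0 : dot (LG i0) z = 0 by rewrite fz /=; ring.
have z_eq0 : z = 0.
  apply: (frame_eq0 hdS) => m; case: (ord3P m) => ->; first exact: hside.
  - by rewrite (dot_side0 _ z0) !fz /= -[RHS]e1; ring.
  - by rewrite (dot_side0 _ z0) !fz /= -[RHS]e2; ring.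
move: hm.
have <- : dot (LG i1) z = m1 by rewrite fz /=; ring.
have <- : dot (LG i2) z = m2 by rewrite fz /=; ring.
by rewrite z_eq0 !dot0r eqxx.
Qed.

Lemma side0_moebius y : dot (LG i0) y = 0 -> dot (LG i1) y != 0 ->
  dot (LS i1) y != 0 ->
  r + s * coord_ratio LG i1 i2 y = coord_ratio LS i1 i2 y * (p + q * coord_ratio LG i1 i2 y).
Proof.
move=> y0 y1 g1y; rewrite /coord_ratio (dot_side0 (LS i1) y0) in g1y *.
by rewrite (dot_side0 (LS i2) y0); field; rewrite y1 g1y.
Qed.

Lemma vertex_on_side0_transfer v : p = 0 \/ r = 0 -> q = 0 \/ s = 0 ->
  vertex_on_side0 LG v -> vertex_on_side0 LS v.
Proof.
move=> hpr hqs; rewrite /vertex_on_side0 !incidE => /andP [/eqP v0 v12].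
rewrite hside // eqxx /= (dot_side0 (LS i1) v0) (dot_side0 (LS i2) v0).
case/orP: v12 => /eqP ->; rewrite !mul0r ?add0r ?addr0.
- by case: hqs => ->; rewrite mulr0 eqxx ?orbT.
- by case: hpr => ->; rewrite mulr0 eqxx ?orbT.
Qed.

End SharedSide.

Lemma same_pointset_side0 (K : fieldType) n (G S : 'I_3 -> seq 'rV[K]_3) LG LS :
  dual_3net n G -> triangle_for G LG -> (1 < n)%N -> triangle_for S LS ->
  same_pointset (G i0) (S i0) ->
  forall y, dot (LG i0) y = 0 -> dot (LS i0) y = 0.
Proof.
move=> hG tG hn tS hGS.
have hdG : \det (lines_mx LG) != 0 by case: tG.
have [N hN] := dual_frame hdG.
have [x0G x1G nx01] := net_two_points hG hn i0.
have side_eq0 := same_pointset_dot_eq0 hGS (@net_side _ _ _ tS i0).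
have offG x : x \in G i0 -> dot (LG i1) x != 0.
  exact: (@net_off_side _ _ _ _ hG tG hn i0 i1 i2 x isT isT isT).
by apply: (side0_line_eq0 hdG hN _ _ _ _ nx01);
  rewrite ?(net_side tG x0G) ?(net_side tG x1G) ?side_eq0 ?offG.
Qed.

Lemma vertex_on_side0_sub (K : fieldType) n (G S : 'I_3 -> seq 'rV[K]_3) LG LS :
  (forall p : nat, p \in [pchar K] -> (n < p)%N) -> (2 < n)%N ->
  dual_3net n G -> dual_3net n S -> same_pointset (G i0) (S i0) ->
  triangle_for G LG -> triangle_for S LS ->
  forall v, vertex_on_side0 LG v -> vertex_on_side0 LS v.
Proof.
move=> hc hn2 hG hS hGS tG tS v.
have hn : (1 < n)%N by apply: ltnW.
have hdG : \det (lines_mx LG) != 0 by case: tG.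
have hdS : \det (lines_mx LS) != 0 by case: tS.
have [N hN] := dual_frame hdG.
have hside := same_pointset_side0 hG tG hn tS hGS.
have [x0G _ _] := net_two_points hG hn i0.
have [y0S _ _] := net_two_points hS hn i0.
set be := coord_ratio LS i1 i2 (S i0)`_0 ^+ n.
have be0 : be != 0 by rewrite expf_neq0 ?(coord_ratio_neq0 hS tS hn _ _ _ y0S).
have hmoeb a : a \in map (coord_ratio LG i1 i2) (G i0) ->
  (dot (LS i2) (N i1) + dot (LS i2) (N i2) * a) ^+ n
  = be * (dot (LS i1) (N i1) + dot (LS i1) (N i2) * a) ^+ n.
  case/mapP => y yG ->.
  have [z zS [c c0 zE]] := proj1 hGS y yG.
  have g1y : dot (LS i1) y != 0.
    have := @net_off_side _ _ _ _ hS tS hn i0 i1 i2 z isT isT isT zS.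
    by rewrite zE dotZr mulf_eq0 negb_or => /andP [_].
  rewrite (side0_moebius hdG hN) ?(net_side tG yG)
    ?(@net_off_side _ _ _ _ hG tG hn i0 i1 i2 y isT isT isT yG) //.
  by rewrite exprMn -(coord_ratioZ _ _ _ _ c0) -zE (coord_ratio_exp_eq hS tS hn zS y0S).
have hpow a : a \in map (coord_ratio LG i1 i2) (G i0) ->
    a ^+ n = coord_ratio LG i1 i2 (G i0)`_0 ^+ n.
  by case/mapP => y yG ->; exact: (coord_ratio_exp_eq hG tG hn yG x0G).
have hsize : size (map (coord_ratio LG i1 i2) (G i0)) = n.
  by rewrite size_map (net_size hG).
have hcoef := exp_coset_bin_coef (coord_ratio_uniq hG tG hn) hsize hpow hmoeb.
have hn0 : n%:R != 0 :> K by apply: (natf_neq0_le hc); rewrite leqnn andbT; lia.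
have [hpr hqs] := bin_coef_diag hn2 hn0 (natf_bin2_neq0 hc hn) be0
  (side0_change_det hdG hN hdS hside) hcoef.
exact: (vertex_on_side0_transfer hdG hN hside).
Qed.

Theorem proposition4p8 (K : closedFieldType) (n : nat)
  (G S : 'I_3 -> seq 'rV[K]_3) :
  (forall p : nat, p \in [pchar K] -> (n < p)%N) ->
  triangular_dual_3net n G ->
  triangular_dual_3net n S ->
  same_pointset (G i0) (S i0) ->
  forall LG LS : 'I_3 -> 'rV[K]_3,
    triangle_for G LG -> triangle_for S LS ->
    forall v : 'rV[K]_3, v != 0 ->
      vertex_on_side0 LG v = vertex_on_side0 LS v.
Proof.
move=> hc [hn4 hG _] [_ hS _] hGS LG LS tG tS v _.
have hn2 : (2 < n)%N by apply: leq_trans hn4.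
apply/idP/idP; first exact: (vertex_on_side0_sub hc hn2 hG hS hGS tG tS).
exact: (vertex_on_side0_sub hc hn2 hS hG (same_pointset_sym hGS) tS tG).
Qed.
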